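(* Let $G$ be a finite set and let $\|\cdot\|$ be a quasi-algebra predual norm on $\mathbb{R}^G$ with respect to a convex compact set $\mathcal{F}\subseteq\mathbb{R}^G$, with associated functions $c,C$ and operator $\mathcal{D}$. If $\psi\in\mathbb{R}^G$ satisfies $\|\psi\|^*_{BAC}\le1$, then $\|\psi^m\|^*\le C(m)$ for every $m\ge1$.
   Context: $\mathbb{R}^G$ carries the inner product $\langle f,g\rangle=\mathbb{E}_{x\in G}f(x)g(x)$; $\psi^m$ is the pointwise power. A norm $\|\cdot\|$ on $\mathbb{R}^G$ is quasi-algebra predual with respect to a convex compact $\mathcal{F}$ if there are $c:\mathbb{R}^+\to\mathbb{R}^+$, $C:\mathbb{Z}^+\to\mathbb{R}^+$ and an operator $\mathcal{D}:\mathbb{R}^G\to\mathbb{R}^G$ such that: (1) $\langle f,\mathcal{D}f\rangle\le1$ for $f\in\mathcal{F}$; (2) $\langle f,\mathcal{D}f\rangle\ge c(\epsilon)$ for $f\in\mathcal{F}$ with $\|f\|\ge\epsilon$; (3) $\|\mathcal{D}f_1\cdots\mathcal{D}f_m\|^*\le C(m)$ for $f_1,\dots,f_m\in\mathcal{F}$, where $\|g\|^*=\sup\{|\langle g,h\rangle|:\|h\|\le1\}$; (4) $\{\mathcal{D}f:f\in\mathcal{F}\}$ is compact and spans $\mathbb{R}^G$. $\|g\|_{BAC}=\max\{|\langle g,\mathcal{D}f\rangle|:f\in\mathcal{F}\}$ and $\|\cdot\|^*_{BAC}$ is its dual norm. *)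

From mathcomp Require Import all_boot all_order all_algebra.
From mathcomp Require Import all_classical all_reals all_analysis.
Set Implicit Arguments.
Unset Strict Implicit.
Unset Printing Implicit Defensive.
Import Order.TTheory GRing.Theory Num.Theory.
Local Open Scope ring_scope.
Local Open Scope classical_set_scope.

Section QAP.
Variables (R : realType) (G : finType).

(* R^G is represented by functions G -> R; the inner product is the average. *)
Definition inner (f g : G -> R) : R := (\sum_(x : G) f x * g x) / #|G|%:R.

Definition ppow (psi : G -> R) (m : nat) : G -> R := fun x => psi x ^+ m.

Definition is_norm (N : (G -> R) -> R) : Prop :=
  [/\ (forall f, 0 <= N f),
      (forall f, N f = 0 -> f = (fun _ => 0)),
      (forall (a : R) f, N (fun x => a * f x) = `|a| * N f) &
      (forall f g, N (fun x => f x + g x) <= N f + N g)].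

Definition dual_norm (N : (G -> R) -> R) (g : G -> R) : R :=
  sup [set r : R | exists h, N h <= 1 /\ r = `|inner g h|].

Definition convex_set (F : set (G -> R)) : Prop :=
  forall f g (t : R), F f -> F g -> 0 <= t <= 1 ->
    F (fun x => t * f x + (1 - t) * g x).

Definition compact_RG (A : set (G -> R)) : Prop := @compact {ptws G -> R^o} A.

Definition spans (A : set (G -> R)) : Prop :=
  forall g : G -> R, exists (n : nat) (v : 'I_n -> G -> R) (a : 'I_n -> R),
    (forall i, A (v i)) /\ (forall x, g x = \sum_(i < n) a i * v i x).

Definition quasi_algebra_predual (N : (G -> R) -> R) (F : set (G -> R))
    (c : R -> R) (C : nat -> R) (D : (G -> R) -> (G -> R)) : Prop :=
  (forall eps : R, 0 < eps -> 0 < c eps) /\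
  (forall m : nat, (0 < m)%N -> 0 < C m) /\
  (forall f, F f -> inner f (D f) <= 1) /\
      (forall f (eps : R), 0 < eps -> F f -> eps <= N f ->
          c eps <= inner f (D f)) /\
      (forall (m : nat) (fs : 'I_m -> G -> R), (0 < m)%N ->
          (forall i, F (fs i)) ->
          dual_norm N (fun x => \prod_(i < m) D (fs i) x) <= C m) /\
  compact_RG (D @` F) /\
  spans (D @` F).

Definition BAC_norm (F : set (G -> R)) (D : (G -> R) -> (G -> R)) (g : G -> R) : R :=
  sup [set r : R | exists f, F f /\ r = `|inner g (D f)|].

Definition BAC_dual (F : set (G -> R)) (D : (G -> R) -> (G -> R)) (psi : G -> R) : R :=
  dual_norm (BAC_norm F D) psi.

End QAP.

(* For [N h <= 1], peel the factors of [psi ^+ m] off one at a time: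
   <psi^(j+1) P, h> = <psi, h psi^j P>, and pairing the second vector with any
   [D f] gives <psi^j (D f) P, h>, which has one [psi] fewer and one [D]-factor
   more.  By induction, ending at axiom (3), all these pairings are at most
   [C m], so [h psi^j P / C m] has BAC norm at most 1 and [BAC_dual psi <= 1]
   bounds <psi, h psi^j P> by [C m].
   The three norms are [sup]s, which are only meaningful on bounded sets:
   boundedness comes from the equivalence of norms in finite dimension, from
   the compactness of [D @` F] and from [D @` F] spanning the space. *)

From mathcomp Require Import all_boot all_order all_algebra.
From mathcomp Require Import all_classical all_reals all_analysis.
From mathcomp Require Import ring.
Set Implicit Arguments.
Unset Strict Implicit.
Unset Printing Implicit Defensive.
Import Order.TTheory GRing.Theory Num.Theory.
Local Open Scope ring_scope.
Local Open Scope classical_set_scope.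

Lemma rV_unit_sphere_compact (R : realType) (n : nat) :
  compact (Num.norm @^-1` [set 1] : set ('rV[R]_n : normedModType R)).
Proof.
apply: bounded_closed_compact.
  exists 1; split; first exact: num_real.
  by move=> y y1 v /= ->; exact: ltW.
exact: (proj1 (@continuous_closedP _ (R : normedModType R) _)
  (@norm_continuous R 'rV[R]_n) _ (@closed_eq R 1)).
Qed.

Section FiniteDimensionalNorm.
Variables (R : realType) (G : finType) (N : (G -> R) -> R).
Hypothesis N_ge0 : forall f, 0 <= N f.
Hypothesis N_eq0 : forall f, N f = 0 -> f = (fun _ => 0).
Hypothesis NZ : forall (a : R) f, N (fun x => a * f x) = `|a| * N f.
Hypothesis N_triangle : forall f g, N (fun x => f x + g x) <= N f + N g.

Lemma norm_zero : N (fun _ => 0) = 0.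
Proof. by have := NZ 0 (fun _ => 0); rewrite normr0 !mul0r. Qed.

Lemma lerB_norm f g : N f - N g <= N (fun x => f x - g x).
Proof.
rewrite lerBlDr; have := N_triangle (fun x => f x - g x) g.
by under eq_fun do rewrite subrK.
Qed.

Definition delta_fun (y : G) : G -> R := fun x => (x == y)%:R.

Lemma norm_le_sum_delta (s : seq G) (a : G -> R) :
  N (fun x => \sum_(y <- s) a y * delta_fun y x) <= \sum_(y <- s) `|a y| * N (delta_fun y).
Proof.
elim: s => [|y s IH].
  by under eq_fun do rewrite big_nil; rewrite norm_zero big_nil.
under eq_fun do rewrite big_cons; rewrite big_cons.
by apply: le_trans (N_triangle _ _) _; rewrite NZ lerD2l.
Qed.

Lemma norm_le_delta (h : G -> R) :
  N h <= \sum_(y <- enum G) `|h y| * N (delta_fun y).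
Proof.
have -> : N h = N (fun x => \sum_(y <- enum G) h y * delta_fun y x).
  congr N; apply: funext => x; rewrite big_enum /= (bigD1 x) //= /delta_fun.
  by rewrite eqxx mulr1 big1 ?addr0 // => y yx; rewrite eq_sym (negbTE yx) mulr0.
exact: norm_le_sum_delta.
Qed.

Let n := #|G|.
Let L := \sum_(y <- enum G) N (delta_fun y).

Definition row_fun (v : 'rV[R]_n) : G -> R := fun x => v ord0 (enum_rank x).

Lemma row_fun_entry_le (v : 'rV[R]_n) x : `|row_fun v x| <= `|v|.
Proof.
by rewrite [leRHS]/Num.norm /= mx_normrE; apply/bigmax_geP; right; exists (ord0, enum_rank x).
Qed.

Lemma norm_row_fun_le v : N (row_fun v) <= `|v| * L.
Proof.
apply: le_trans (norm_le_delta _) _; rewrite /L mulr_sumr.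
by apply: ler_sum => y _; apply: ler_wpM2r => //; exact: row_fun_entry_le.
Qed.

Lemma norm_row_fun_lipschitz v w :
  `|N (row_fun v) - N (row_fun w)| <= `|v - w| * L.
Proof.
have rowB a b : (fun x => row_fun a x - row_fun b x) = row_fun (a - b).
  by apply: funext => x; rewrite /row_fun !mxE.
rewrite ler_norml; apply/andP; split.
  rewrite lerNl opprB; apply: le_trans (lerB_norm _ _) _; rewrite rowB distrC.
  exact: norm_row_fun_le.
by apply: le_trans (lerB_norm _ _) _; rewrite rowB; exact: norm_row_fun_le.
Qed.

Lemma norm_row_fun_continuous :
  continuous (fun v : ('rV[R]_n : normedModType R) => N (row_fun v) : R^o).
Proof.
move=> v; apply/(@cvgrPdist_le _ _ _ (nbhs v) (nbhs_filter v)) => e e0.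
have L1_gt0 : 0 < L + 1 by rewrite ltr_wpDl // /L sumr_ge0.
have : 0 < e / (L + 1) by rewrite divr_gt0.
move=> /(@cvgr_dist_le _ _ _ (nbhs v) (nbhs_filter v) id v (@cvg_id _ (nbhs v))).
apply: filterS => w vw.
apply: le_trans (norm_row_fun_lipschitz _ _) _.
apply: le_trans (_ : `|v - w| * (L + 1) <= _).
  by apply: ler_wpM2l => //; rewrite lerDl.
by rewrite -ler_pdivlMr.
Qed.

(* [N] attains a positive minimum on the compact unit sphere of ['rV_n]. *)
Lemma norm_dominates_entries : exists2 k, 0 < k & forall h x, `|h x| <= k * N h.
Proof.
have [[x0 _]|G0] := pselect (exists x : G, True); last first.
  by exists 1 => // h x; exfalso; apply: G0; exists x.
have S0 : (Num.norm @^-1` [set 1] : set ('rV[R]_n : normedModType R)) !=set0.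
  pose e : 'rV[R]_n := delta_mx 0 (enum_rank x0).
  have e_neq0 : `|e| != 0.
    rewrite normr_eq0; apply/eqP => /matrixP/(_ 0 (enum_rank x0)).
    by rewrite !mxE !eqxx => /eqP; rewrite oner_eq0.
  by exists (`|e|^-1 *: e); rewrite /= normrZV // unitfE.
have [c /set_mem Sc c_min] := compact_EVT_min S0 (@rV_unit_sphere_compact R n)
  (continuous_subspaceT norm_row_fun_continuous).
have c_gt0 : 0 < N (row_fun c).
  rewrite lt_def N_ge0 andbT; apply/eqP => /N_eq0 c0.
  suff c_eq0 : c = 0 by move: Sc; rewrite /= c_eq0 normr0 => /esym/eqP; rewrite oner_eq0.
  apply/rowP => i; rewrite !mxE.
  by have := congr1 (fun f => f (enum_val i)) c0; rewrite /row_fun /= enum_valK.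
exists (N (row_fun c))^-1; first by rewrite invr_gt0.
move=> h x; pose v : 'rV[R]_n := \row_i h (enum_val i).
have hv : row_fun v = h by apply: funext => y; rewrite /row_fun mxE enum_rankK.
have [v0|v_neq0] := eqVneq v 0.
  by rewrite -hv v0 /row_fun mxE normr0 mulr_ge0 // invr_ge0 N_ge0.
have v_gt0 : 0 < `|v| by rewrite normr_gt0.
have := c_min (`|v|^-1 *: v); rewrite inE /= normrZV ?unitfE ?gt_eqF // => /(_ erefl).
have -> : row_fun (`|v|^-1 *: v) = fun y => `|v|^-1 * h y.
  by apply: funext => y; rewrite /row_fun mxE -hv /row_fun.
rewrite NZ ger0_norm ?invr_ge0 ?normr_ge0 // => c_le.
apply: le_trans (_ : `|v| <= _); first by rewrite -hv; exact: row_fun_entry_le.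
by rewrite mulrC ler_pdivlMr // -ler_pdivlMl // mulrC.
Qed.

End FiniteDimensionalNorm.

Lemma sup_le_nonneg (R : realType) (E : set R) (M : R) :
  0 <= M -> (forall r, E r -> r <= M) -> sup E <= M.
Proof.
move=> M_ge0 EM; have [E0|E0] := pselect (E !=set0); first exact: ge_sup.
by rewrite sup_out // => -[].
Qed.

Section Inner.
Variables (R : realType) (G : finType).
Implicit Types (g h : G -> R).

Lemma abs_inner_le g h (B : G -> R) : (forall x, `|h x| <= B x) ->
  `|inner g h| <= (\sum_x `|g x| * B x) / #|G|%:R.
Proof.
move=> hB; rewrite /inner normrM normfV normr_nat ler_wpM2r ?invr_ge0 //.
apply: le_trans (ler_norm_sum _ _ _) _; apply: ler_sum => x _.
by rewrite normrM ler_wpM2l.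
Qed.

Lemma innerZl a g h : inner (fun x => a * g x) h = a * inner g h.
Proof.
by rewrite /inner mulrA mulr_sumr; congr (_ / _); apply: eq_bigr => x _; rewrite mulrA.
Qed.

Lemma innerZr a g h : inner g (fun x => a * h x) = a * inner g h.
Proof.
by rewrite /inner mulrA mulr_sumr; congr (_ / _); apply: eq_bigr => x _; rewrite mulrCA.
Qed.

Lemma inner_sumr g k (a : 'I_k -> R) (v : 'I_k -> G -> R) :
  inner g (fun x => \sum_(i < k) a i * v i x) = \sum_(i < k) a i * inner g (v i).
Proof.
rewrite /inner; under eq_bigr do rewrite mulr_sumr.
rewrite exchange_big /= mulr_suml; apply: eq_bigr => i _.
by rewrite mulrA mulr_sumr; congr (_ / _); apply: eq_bigr => x _; rewrite mulrCA.
Qed.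

Lemma abs_inner_le_sup (I : Type) (P : I -> Prop) (u : I -> G -> R) (B : G -> R) g i :
  (forall j, P j -> forall x, `|u j x| <= B x) -> P i ->
  `|inner g (u i)| <= sup [set r | exists j, P j /\ r = `|inner g (u j)|].
Proof.
move=> uB Pi; apply: sup_upper_bound; last by exists i.
split; first by exists `|inner g (u i)|, i.
exists ((\sum_x `|g x| * B x) / #|G|%:R) => _ [j [Pj ->]].
exact/abs_inner_le/uB.
Qed.

End Inner.

Lemma compact_RG_bounded (R : realType) (G : finType) (A : set (G -> R)) :
  compact_RG A -> forall x, exists M, forall f, A f -> `|f x| <= M.
Proof.
move=> A_compact x.
pose A' : set {ptws G -> R^o} := A.
have proj_cont : {within A', continuous (proj x : {ptws G -> R^o} -> R^o)}.
  exact/continuous_subspaceT/proj_continuous.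
have [M [_ AM]] := compact_bounded (continuous_compact proj_cont A_compact).
exists (M + 1) => f Af; apply: (AM (M + 1)); last by exists f.
by rewrite ltrDl ltr01.
Qed.

Lemma abs_inner_le_dual_norm (R : realType) (G : finType) (N : (G -> R) -> R) g h :
  is_norm N -> N h <= 1 -> `|inner g h| <= dual_norm N g.
Proof.
case=> N_ge0 N_eq0 NZ N_triangle Nh.
have [k k_gt0 Nk] := norm_dominates_entries N_ge0 N_eq0 NZ N_triangle.
apply: (abs_inner_le_sup (P := fun h => N h <= 1) (u := id) (B := fun=> k)) => //.
by move=> h' Nh' x; apply: le_trans (Nk h' x) _; rewrite ler_piMr // ltW.
Qed.

Section BACNorm.
Variables (R : realType) (G : finType) (F : set (G -> R)) (D : (G -> R) -> G -> R).
Hypothesis DF_compact : compact_RG (D @` F).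
Hypothesis DF_spans : spans (D @` F).

Lemma abs_inner_le_BAC_norm g f : F f -> `|inner g (D f)| <= BAC_norm F D g.
Proof.
have [B DB] := choice (compact_RG_bounded DF_compact).
by apply: (abs_inner_le_sup (B := B)) => f' Ff' x; apply: DB; exists f'.
Qed.

(* Expanding the point mass at [x] over the spanning set bounds [h x] by the
   BAC norm of [h]. *)
Lemma BAC_norm_le1_bounded x :
  exists B, forall h, BAC_norm F D h <= 1 -> `|h x| <= B.
Proof.
have [k [v [a [Dv ex]]]] := DF_spans (fun y => (y == x)%:R * #|G|%:R).
exists (\sum_i `|a i|) => h h_le1.
have G_neq0 : #|G|%:R != 0 :> R by rewrite pnatr_eq0 -lt0n; apply/card_gt0P; exists x.
have -> : h x = inner h (fun y => \sum_i a i * v i y).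
  rewrite -(funext ex) /inner (bigD1 x) //= eqxx mul1r big1 ?addr0 ?mulfK //.
  by move=> y /negbTE ->; rewrite mul0r mulr0.
rewrite inner_sumr; apply: le_trans (ler_norm_sum _ _ _) _.
apply: ler_sum => i _; rewrite normrM ler_piMr //.
by have [f Ff <-] := Dv i; apply: le_trans (abs_inner_le_BAC_norm h Ff) h_le1.
Qed.

Lemma abs_inner_le_BAC_dual psi h :
  BAC_norm F D h <= 1 -> `|inner psi h| <= BAC_dual F D psi.
Proof.
have [B hB] := choice BAC_norm_le1_bounded.
move=> h_le1; apply: (abs_inner_le_sup (P := fun h => BAC_norm F D h <= 1) (u := id)) h_le1.
by move=> h' h'_le1 x; exact: hB.
Qed.

Lemma abs_inner_le_of_BAC_dual psi g (M : R) :
  BAC_dual F D psi <= 1 -> 0 < M ->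
  (forall f, F f -> `|inner g (D f)| <= M) -> `|inner psi g| <= M.
Proof.
move=> psi_le1 M_gt0 gM.
have g_le1 : BAC_norm F D (fun x => M^-1 * g x) <= 1.
  apply: sup_le_nonneg => // _ [f [Ff ->]].
  by rewrite innerZl normrM gtr0_norm ?invr_gt0 // mulrC ler_pdivrMr // mul1r gM.
have := le_trans (abs_inner_le_BAC_dual psi g_le1) psi_le1.
by rewrite innerZr normrM gtr0_norm ?invr_gt0 // mulrC ler_pdivrMr // mul1r.
Qed.

End BACNorm.

Section Peeling.
Variables (R : realType) (G : finType) (F : set (G -> R)) (D : (G -> R) -> G -> R).
Variables (psi h : G -> R) (m : nat) (M : R).
Hypothesis prod_D_bound : forall fs : 'I_m -> G -> R, (forall i, F (fs i)) ->
  `|inner (fun x => \prod_(i < m) D (fs i) x) h| <= M.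
Hypothesis psi_peel : forall g : G -> R,
  (forall f, F f -> `|inner g (D f)| <= M) -> `|inner psi g| <= M.

Lemma abs_inner_pow_prod_le j k (t : k.-tuple (G -> R)) :
  (k + j)%N = m -> (forall i, F (tnth t i)) ->
  `|inner (fun x => psi x ^+ j * \prod_(f <- t) D f x) h| <= M.
Proof.
elim: j k t => [|j IH] k t km Ft.
  rewrite addn0 in km; move: t Ft; rewrite km => t Ft.
  under eq_fun do rewrite expr0 mul1r big_tuple.
  exact: prod_D_bound.
have -> : inner (fun x => psi x ^+ j.+1 * \prod_(f <- t) D f x) h
    = inner psi (fun x => h x * psi x ^+ j * \prod_(f <- t) D f x).
  by rewrite /inner; congr (_ / _); apply: eq_bigr => x _; rewrite exprS; ring.
apply: psi_peel => f Ff.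
have -> : inner (fun x => h x * psi x ^+ j * \prod_(f <- t) D f x) (D f)
    = inner (fun x => psi x ^+ j * \prod_(f' <- [tuple of f :: t]) D f' x) h.
  by rewrite /inner; congr (_ / _); apply: eq_bigr => x _; rewrite big_cons; ring.
apply: IH; first by rewrite addSnnS.
by move=> i; case: (unliftP ord0 i) => [i' ->|->]; rewrite ?tnthS ?tnth0.
Qed.

Lemma abs_inner_ppow_le : `|inner (ppow psi m) h| <= M.
Proof.
have -> : ppow psi m = fun x => psi x ^+ m * \prod_(f <- [tuple] : 0.-tuple _) D f x.
  by apply: funext => x; rewrite big_nil mulr1.
by apply: abs_inner_pow_prod_le => // -[].
Qed.

End Peeling.

Theorem mainTheorem16 (R : realType) (G : finType)
    (N : (G -> R) -> R) (F : set (G -> R))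
    (c : R -> R) (C : nat -> R) (D : (G -> R) -> (G -> R)) :
  is_norm N ->
  convex_set F -> compact_RG F ->
  quasi_algebra_predual N F c C D ->
  forall psi : G -> R, BAC_dual F D psi <= 1 ->
  forall m : nat, (1 <= m)%N -> dual_norm N (ppow psi m) <= C m.
Proof.
move=> N_norm _ _ [_ [C_gt0 [_ [_ [prod_D_dual [DF_compact DF_spans]]]]]] psi psi_le1 m m_gt0.
apply: sup_le_nonneg => [|_ [h [h_le1 ->]]]; first exact/ltW/C_gt0.
apply: (@abs_inner_ppow_le _ _ F D) => [fs Ffs | g gC].
  apply: le_trans (abs_inner_le_dual_norm _ N_norm h_le1) _.
  exact: prod_D_dual.
exact: (abs_inner_le_of_BAC_dual DF_compact DF_spans psi_le1 (C_gt0 m m_gt0) gC).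
Qed.
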